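(* Let $H$ be an RB function for $\mathcal X_r$, $\eta\ge\max_{p\in\mathcal Q}H(\mathbf f[p])$, let $\epsilon,\epsilon'>0$, let $H_{\mathrm{thr}}\in\mathbb R$, and let $\mathcal V$ be a $1-\epsilon$ confidence region. Let $\lambda$ be the event consisting of all $(\vec a,\vec x)\in\mathcal A^n\times\mathcal X^n$ with $nH(\mathcal V(\vec a,\vec x,\epsilon))-\nu(\vec x)\eta\ge H_{\mathrm{thr}}$ (the abort outcome $\perp$ is not in $\lambda$). Then for every $n$-round device behavior $P_{A\mid X}$ and input distribution $\Pi$, the distribution $P_{AX}$ is $\epsilon$-close in total variation distance to a distribution $\tilde P_{AX}(\vec a,\vec x)=\tilde P(\vec a\mid\vec x)\Pi(\vec x)$ on $(\mathcal A^n\cup\{\perp\})\times\mathcal X^n$ such that, according to $\tilde P_{AX}$, either (i) $\Pr(\lambda)\le\epsilon'$, or (ii) $H_{\min}(A\mid X;\lambda)\ge H_{\mathrm{thr}}-\log_2\frac1{\epsilon'}$, where $H_{\min}(A\mid X;\lambda)=-\log_2\sum_{\vec x}\tilde P(\vec x\mid\lambda)\max_{\vec a}\tilde P(\vec a\mid\vec x;\lambda)$ (conditional probabilities computed from $\tilde P_{AX}$).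
   Context: Setting. A Bell device consists of $k$ boxes with finite input sets $\mathcal X_i$ and output sets $\mathcal A_i$; $\mathcal X=\prod_i\mathcal X_i$, $\mathcal A=\prod_i\mathcal A_i$. Single-round behaviors $p=(p(a\mid x))_{a,x}$; $\mathcal Q$ the set of quantum behaviors (realizable by a $k$-partite quantum state and local measurements). Bell expression $f$: $f[p]=\sum_{a,x}f(a,x)p(a\mid x)$; fixed $\mathbf f=(f_1,\dots,f_t)$, $\mathbf f[p]\in\mathbb R^t$, $\mathbf f[\mathcal Q]=\{\mathbf f[p]:p\in\mathcal Q\}$. $n$-round device behavior: $P(\vec a\mid\vec x)=\prod_{j=1}^np_{\vec a_{j-1},\vec x_{j-1}}(a_j\mid x_j)$ with each $p_{\vec a_{j-1},\vec x_{j-1}}\in\mathcal Q$, where $\vec a_j,\vec x_j$ are length-$j$ prefixes. Inputs drawn with $\Pi(\vec x)=\prod_j\pi(x_j)$ for a distribution $\pi$ on $\mathcal X$; $P_{AX}(\vec a,\vec x)=P(\vec a\mid\vec x)\Pi(\vec x)$. RB function for nonempty $\mathcal X_r\subseteq\mathcal X$: $H:\mathbf f[\mathcal Q]\to[0,\log_2|\mathcal A|]$ with (1) $\min_{a\in\mathcal A,x\in\mathcal X_r}(-\log_2p(a\mid x))\ge H(\mathbf f[p])$ for all $p\in\mathcal Q$; (2) $H(q\mathbf f[p_1]+(1-q)\mathbf f[p_2])\le qH(\mathbf f[p_1])+(1-q)H(\mathbf f[p_2])$ for $q\in[0,1]$, $p_1,p_2\in\mathcal Q$. For $\mathcal V\subseteq\mathbb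 R^t$, $H(\mathcal V)$ is a fixed number $\le\inf\{H(\mathbf y):\mathbf y\in\mathbf f[\mathcal Q]\cap\mathcal V\}$, and $0$ if the intersection is empty. $\nu(\vec x)=\#\{j:x_j\notin\mathcal X_r\}$. A $1-\epsilon$ confidence region is an assignment $(\vec a,\vec x)\mapsto\mathcal V(\vec a,\vec x,\epsilon)\subseteq\mathbb R^t$ such that for every $n$-round device behavior, $\Pr_{P_{AX}}[\frac1n\sum_{j=1}^n\mathbf f[p_{\vec a_{j-1},\vec x_{j-1}}]\in\mathcal V(\vec a,\vec x,\epsilon)]\ge1-\epsilon$. *)

From Stdlib Require Import Reals ClassicalEpsilon.
From mathcomp Require Import all_boot.
Set Implicit Arguments. Unset Strict Implicit. Unset Printing Implicit Defensive.
Local Open Scope R_scope.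

Definition sumR {T} (s : seq T) (F : T -> R) : R := foldr (fun x acc => F x + acc) 0 s.
Definition prodR {T} (s : seq T) (F : T -> R) : R := foldr (fun x acc => F x * acc) 1 s.
(* maximum over a list; used only for nonnegative quantities (default 0). *)
Definition maxR {T} (s : seq T) (F : T -> R) : R := foldr (fun x acc => Rmax (F x) acc) 0 s.
Definition fsum (T : finType) (F : T -> R) : R := sumR (enum T) F.
Definition fmax (T : finType) (F : T -> R) : R := maxR (enum T) F.

Definition ind (P : Prop) : R := if excluded_middle_informative P then 1 else 0.

Definition log2 (x : R) : R := ln x / ln 2.

Definition is_distr (T : finType) (d : T -> R) : Prop :=
  (forall x, 0 <= d x) /\ fsum d = 1.

(* A = prod_i A_i (outputs), X = prod_i X_i (inputs); behaviour p(a|x) *)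
Definition behavior (A X : finType) := A -> X -> R.
Definition vec (t : nat) := 'I_t -> R.

Definition bell_val (A X : finType) (t : nat) (f : 'I_t -> A -> X -> R)
  (p : behavior A X) : vec t :=
  fun i => fsum (fun ax : A * X => f i ax.1 ax.2 * p ax.1 ax.2).

Definition is_RB_function (A X : finType) (t : nat) (Q : behavior A X -> Prop)
  (f : 'I_t -> A -> X -> R) (Xr : pred X) (H : vec t -> R) : Prop :=
  (forall p, Q p -> 0 <= H (bell_val f p) <= log2 (INR #|A|)) /\
  (* (1): min_{a, x in Xr} (-log2 p(a|x)) >= H(f[p])   (-log2 0 = +oo) *)
  (forall p, Q p -> forall a x, Xr x -> 0 < p a x -> - log2 (p a x) >= H (bell_val f p)) /\
  (forall q p1 p2, 0 <= q <= 1 -> Q p1 -> Q p2 ->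
     H (fun i => q * bell_val f p1 i + (1 - q) * bell_val f p2 i)
       <= q * H (bell_val f p1) + (1 - q) * H (bell_val f p2)).

(* H(V): a fixed number <= inf { H(y) : y in f[Q] cap V }, and 0 if empty *)
Definition is_set_extension (A X : finType) (t : nat) (Q : behavior A X -> Prop)
  (f : 'I_t -> A -> X -> R) (H : vec t -> R) (HV : (vec t -> Prop) -> R) : Prop :=
  (forall (S : vec t -> Prop) p, Q p -> S (bell_val f p) -> HV S <= H (bell_val f p)) /\
  (forall (S : vec t -> Prop), (forall p, Q p -> ~ S (bell_val f p)) -> HV S = 0).

(* An n-round device behaviour: for each history (prefixes a_{j-1}, x_{j-1})
   a single-round behaviour p_{a_{j-1},x_{j-1}} in Q. *)
Definition device_ok (A X : finType) (n : nat) (Q : behavior A X -> Prop)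
  (beh : seq A -> seq X -> behavior A X) : Prop :=
  forall (sa : seq A) (sx : seq X), size sa = size sx -> (size sa < n)%N -> Q (beh sa sx).

Definition devP (A X : finType) (n : nat) (beh : seq A -> seq X -> behavior A X)
  (a : n.-tuple A) (x : n.-tuple X) : R :=
  prodR (enum 'I_n) (fun j => beh (take j a) (take j x) (tnth a j) (tnth x j)).

Definition inputP (X : finType) (n : nat) (pi : X -> R) (x : n.-tuple X) : R :=
  prodR (enum 'I_n) (fun j => pi (tnth x j)).

Definition avg_val (A X : finType) (t n : nat) (f : 'I_t -> A -> X -> R)
  (beh : seq A -> seq X -> behavior A X) (a : n.-tuple A) (x : n.-tuple X) : vec t :=
  fun i => / INR n * sumR (enum 'I_n) (fun j => bell_val f (beh (take j a) (take j x)) i).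

Definition conf_region (A X : finType) (t n : nat) (Q : behavior A X -> Prop)
  (f : 'I_t -> A -> X -> R) (pi : X -> R) (eps : R)
  (V : n.-tuple A -> n.-tuple X -> R -> vec t -> Prop) : Prop :=
  forall beh, device_ok n Q beh ->
    fsum (fun ax : n.-tuple A * n.-tuple X =>
            devP beh ax.1 ax.2 * inputP pi ax.2 * ind (V ax.1 ax.2 eps (avg_val f beh ax.1 ax.2)))
    >= 1 - eps.

Definition nu (X : finType) (n : nat) (Xr : pred X) (x : n.-tuple X) : nat :=
  count (fun y => ~~ Xr y) x.

(* ---------- distributions on (A^n cup {bot}) x X^n ; None = bot ---------- *)
Definition P_AX (A X : finType) (n : nat) (beh : seq A -> seq X -> behavior A X)
  (pi : X -> R) (o : option (n.-tuple A)) (x : n.-tuple X) : R :=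
  match o with Some a => devP beh a x * inputP pi x | None => 0 end.

Definition tv_dist (T : finType) (P1 P2 : T -> R) : R :=
  / 2 * fsum (fun z => Rabs (P1 z - P2 z)).

Definition Pt_AX (X : finType) (O : finType) (n : nat) (pi : X -> R)
  (Pt : O -> n.-tuple X -> R) (o : O) (x : n.-tuple X) : R :=
  Pt o x * inputP pi x.

Definition Pr_event (A X : finType) (n : nat)
  (PAX : option (n.-tuple A) -> n.-tuple X -> R)
  (lam : n.-tuple A -> n.-tuple X -> Prop) : R :=
  fsum (fun ax : n.-tuple A * n.-tuple X => PAX (Some ax.1) ax.2 * ind (lam ax.1 ax.2)).

Definition Pr_event_x (A X : finType) (n : nat)
  (PAX : option (n.-tuple A) -> n.-tuple X -> R)
  (lam : n.-tuple A -> n.-tuple X -> Prop) (x : n.-tuple X) : R :=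
  fsum (fun a : n.-tuple A => PAX (Some a) x * ind (lam a x)).

Definition Hmin_lam (A X : finType) (n : nat)
  (PAX : option (n.-tuple A) -> n.-tuple X -> R)
  (lam : n.-tuple A -> n.-tuple X -> Prop) : R :=
  - log2 (fsum (fun x : n.-tuple X =>
      (Pr_event_x PAX lam x / Pr_event PAX lam) *
      fmax (fun a : n.-tuple A => PAX (Some a) x * ind (lam a x) / Pr_event_x PAX lam x))).

(* Truncate the device's distribution to the event that the confidence region
   contains the true average f-value; this costs at most eps in total variation.
   On a surviving (a, x), property (1) of the RB function bounds each round's
   probability p_j(a_j|x_j) by 2^(-H(f[p_j])) when x_j is in Xr, and by
   1 <= 2^(eta - H(f[p_j])) otherwise, while Jensen's inequality for the convex H
   gives sum_j H(f[p_j]) >= n H(V).  Hence P(a|x) <= 2^(-Hthr) on lambda, and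
   conditioning on lambda, of probability > eps', multiplies the guessing
   probability by at most 1/eps'. *)
From HB Require Import structures.
From Pilot Require Import Defs.
From Stdlib Require Import Reals ClassicalEpsilon FunctionalExtensionality Lra.
From mathcomp Require Import all_boot.
Set Implicit Arguments. Unset Strict Implicit. Unset Printing Implicit Defensive.
Local Open Scope R_scope.

Lemma RplusA : associative Rplus. Proof. by move=> *; rewrite Rplus_assoc. Qed.
Lemma RmultA : associative Rmult. Proof. by move=> *; rewrite Rmult_assoc. Qed.
HB.instance Definition _ := Monoid.isComLaw.Build R R0 Rplus RplusA Rplus_comm Rplus_0_l.
HB.instance Definition _ := Monoid.isMulLaw.Build R R0 Rmult Rmult_0_l Rmult_0_r.
HB.instance Definition _ :=
  Monoid.isAddLaw.Build R Rmult Rplus Rmult_plus_distr_r Rmult_plus_distr_l.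
HB.instance Definition _ := Monoid.isComLaw.Build R R1 Rmult RmultA Rmult_comm Rmult_1_l.

Lemma sumRE T (s : seq T) F : sumR s F = \big[Rplus/0]_(x <- s) F x.
Proof. by elim: s => [|x s IH] /=; rewrite ?big_nil ?big_cons ?IH. Qed.

Lemma prodRE T (s : seq T) F : prodR s F = \big[Rmult/1]_(x <- s) F x.
Proof. by elim: s => [|x s IH] /=; rewrite ?big_nil ?big_cons ?IH. Qed.

Lemma fsumE (T : finType) (F : T -> R) : fsum F = \big[Rplus/0]_(x : T) F x.
Proof. by rewrite /fsum sumRE big_enum. Qed.

Lemma fsum_pair (T1 T2 : finType) (G : T1 * T2 -> R) :
  fsum G = \big[Rplus/0]_(x1 : T1) \big[Rplus/0]_(x2 : T2) G (x1, x2).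
Proof. by rewrite fsumE pair_bigA; apply: eq_bigr => -[]. Qed.

Lemma big_option_Rplus (T : finType) (F : option T -> R) :
  \big[Rplus/0]_(o : option T) F o = F None + \big[Rplus/0]_(a : T) F (Some a).
Proof.
rewrite (bigD1 None) //=; congr (_ + _).
rewrite (reindex_omap Some id) /=; last by case.
by apply: eq_bigl => a; rewrite /= eqxx.
Qed.

Lemma big_Rplus_opp (I : Type) (s : seq I) (F : I -> R) :
  \big[Rplus/0]_(i <- s) - F i = - \big[Rplus/0]_(i <- s) F i.
Proof. by rewrite (big_morph Ropp Ropp_plus_distr Ropp_0). Qed.

Lemma big_Rplus_ge0 (I : Type) (s : seq I) (P : pred I) (F : I -> R) :
  (forall i, P i -> 0 <= F i) -> 0 <= \big[Rplus/0]_(i <- s | P i) F i.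
Proof. by move=> F_ge0; apply: big_ind => // *; lra. Qed.

Lemma big_Rplus_le (I : Type) (s : seq I) (P : pred I) (F G : I -> R) :
  (forall i, P i -> F i <= G i) ->
  \big[Rplus/0]_(i <- s | P i) F i <= \big[Rplus/0]_(i <- s | P i) G i.
Proof. by move=> FG; apply: big_ind2 => // *; lra. Qed.

Lemma big_Rplus_ge_term (I : finType) (F : I -> R) (j : I) :
  (forall i, 0 <= F i) -> F j <= \big[Rplus/0]_(i : I) F i.
Proof.
move=> F_ge0; rewrite (bigD1 j) //=.
have := @big_Rplus_ge0 _ (index_enum I) (fun i => i != j) F (fun i _ => F_ge0 i); lra.
Qed.

Lemma big_Rplus_gt0_exists (I : finType) (F : I -> R) :
  0 < \big[Rplus/0]_(i : I) F i -> exists i, 0 < F i.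
Proof.
move=> sum_gt0; apply: NNPP => no_pos.
have : \big[Rplus/0]_(i : I) F i <= \big[Rplus/0]_(i : I) 0.
  by apply: big_Rplus_le => i _; apply: Rnot_lt_le => F_gt0; apply: no_pos; exists i.
by rewrite big1_eq; lra.
Qed.

Lemma big_Rmult_ge0 (I : Type) (s : seq I) (F : I -> R) :
  (forall i, 0 <= F i) -> 0 <= \big[Rmult/1]_(i <- s) F i.
Proof. by move=> F_ge0; apply: big_ind => // *; [lra | apply: Rmult_le_pos]. Qed.

Lemma prodR_gt0 (T : eqType) (s : seq T) (G : T -> R) :
  (forall i, i \in s -> 0 < G i) -> 0 < prodR s G.
Proof.
elim: s => [|i s IH] G_gt0 /=; first lra.
apply: Rmult_lt_0_compat; first by apply: G_gt0; rewrite inE eqxx.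
by apply: IH => j j_s; apply: G_gt0; rewrite inE j_s orbT.
Qed.

Lemma ln2_gt0 : 0 < ln 2.
Proof. have := ln_lt_2; lra. Qed.

Lemma log2_mult x y : 0 < x -> 0 < y -> log2 (x * y) = log2 x + log2 y.
Proof. by move=> x_gt0 y_gt0; rewrite /log2 ln_mult //; lra. Qed.

Lemma log2_Rinv x : 0 < x -> log2 (/ x) = - log2 x.
Proof. by move=> x_gt0; rewrite /log2 ln_Rinv //; lra. Qed.

Lemma log2_le x y : 0 < x -> x <= y -> log2 x <= log2 y.
Proof.
move=> x_gt0 [x_lt_y | <-]; last lra.
apply: Rmult_le_compat_r; last exact/Rlt_le/ln_increasing.
by apply/Rlt_le/Rinv_0_lt_compat/ln2_gt0.
Qed.

Lemma log2_lt x y : 0 < x -> x < y -> log2 x < log2 y.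
Proof.
move=> x_gt0 x_lt_y; apply: Rmult_lt_compat_r; last exact: ln_increasing.
exact/Rinv_0_lt_compat/ln2_gt0.
Qed.

Lemma log2_le1 x : 0 < x -> x <= 1 -> log2 x <= 0.
Proof. by move=> x_gt0 x_le1; have := log2_le x_gt0 x_le1; rewrite /log2 ln_1; lra. Qed.

Lemma log2_Rpower2 y : log2 (Rpower 2 y) = y.
Proof. by rewrite /log2 /Rpower ln_exp; have ln2_pos := ln2_gt0; field; lra. Qed.

Lemma Rpower2_log2 x : 0 < x -> Rpower 2 (log2 x) = x.
Proof.
move=> x_gt0; rewrite /Rpower /log2 -[RHS](exp_ln x) //.
have ln2_pos := ln2_gt0; congr exp; field; lra.
Qed.

Lemma le_Rpower2_of_log2 x y : 0 < x -> log2 x <= y -> x <= Rpower 2 y.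
Proof. by move=> x_gt0 le_xy; rewrite -(Rpower2_log2 x_gt0); apply: Rle_Rpower => //; lra. Qed.

Lemma log2_prodR (T : eqType) (s : seq T) (G : T -> R) :
  (forall i, i \in s -> 0 < G i) -> log2 (prodR s G) = sumR s (fun i => log2 (G i)).
Proof.
elim: s => [|i s IH] G_gt0 /=; first by rewrite /log2 ln_1; lra.
have G_s_gt0 j : j \in s -> 0 < G j by move=> j_s; apply: G_gt0; rewrite inE j_s orbT.
rewrite log2_mult ?IH //; last exact: prodR_gt0.
by apply: G_gt0; rewrite inE eqxx.
Qed.

Lemma prodR_gt0_factor (T : eqType) (s : seq T) (G : T -> R) :
  (forall i, 0 <= G i) -> 0 < prodR s G -> forall i, i \in s -> 0 < G i.
Proof.
move=> G_ge0; elim: s => [//|j s IH] /= prod_gt0 i.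
have rest_ge0 : 0 <= prodR s G by rewrite prodRE; apply: big_Rmult_ge0.
have Gj_gt0 : 0 < G j by case: (G_ge0 j) => // Gj0; rewrite -Gj0 in prod_gt0; lra.
have rest_gt0 : 0 < prodR s G by case: rest_ge0 => // r0; rewrite -r0 in prod_gt0; lra.
by rewrite inE => /orP [/eqP -> | /(IH rest_gt0)].
Qed.

Lemma maxR_ge0 T (s : seq T) F : 0 <= maxR s F.
Proof. by elim: s => [|x s IH] /=; [lra | apply: Rle_trans IH (Rmax_r _ _)]. Qed.

Lemma maxR_le T (s : seq T) F M : 0 <= M -> (forall y, F y <= M) -> maxR s F <= M.
Proof. by move=> M_ge0 F_le; elim: s => [|x s IH] //=; apply: Rmax_lub. Qed.

Lemma maxR_ge (T : eqType) (s : seq T) F y : y \in s -> F y <= maxR s F.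
Proof.
elim: s => [//|x s IH]; rewrite inE => /orP [/eqP -> | y_s] /=; first exact: Rmax_l.
exact: Rle_trans (IH y_s) (Rmax_r _ _).
Qed.

Lemma maxR_scale T (s : seq T) F c : 0 <= c -> maxR s (fun y => F y * c) = maxR s F * c.
Proof.
move=> c_ge0; elim: s => [|x s IH] /=; first lra.
by rewrite IH (Rmult_comm (F x)) (Rmult_comm (maxR s F)) RmaxRmult // Rmult_comm.
Qed.

Lemma ind_cases (P : Prop) : (P /\ Defs.ind P = 1) \/ (~ P /\ Defs.ind P = 0).
Proof. by rewrite /Defs.ind; case: excluded_middle_informative => HP; [left | right]. Qed.

Lemma ind_bounds (P : Prop) : 0 <= Defs.ind P <= 1.
Proof. by case: (ind_cases P) => -[_ ->]; lra. Qed.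

Section Truncation.
Variables (T Y : finType) (P : T -> Y -> R) (E : T -> Y -> Prop).

Definition truncate (o : option T) (y : Y) : R :=
  match o with
  | Some t => P t y * Defs.ind (E t y)
  | None => fsum (fun t => P t y * (1 - Defs.ind (E t y)))
  end.

Hypothesis P_distr : forall y, is_distr (fun t => P t y).

Lemma truncate_is_distr y : is_distr (fun o => truncate o y).
Proof.
have [P_ge0 P_sum1] := P_distr y.
have kept_lost_ge0 t : 0 <= P t y * Defs.ind (E t y) /\ 0 <= P t y * (1 - Defs.ind (E t y)).
  by have := ind_bounds (E t y); have := P_ge0 t; split; nra.
split.
  case=> [t | /=]; first exact: (proj1 (kept_lost_ge0 t)).
  by rewrite fsumE; apply: big_Rplus_ge0 => t _; case: (kept_lost_ge0 t).
rewrite fsumE big_option_Rplus /= fsumE -big_split /= -[RHS]P_sum1 fsumE.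
by apply: eq_bigr => t _; ring.
Qed.

Lemma fsum_joint (w : Y -> R) :
  is_distr w -> fsum (fun z : T * Y => P z.1 z.2 * w z.2) = 1.
Proof.
move=> [w_ge0 w_sum1]; rewrite fsum_pair exchange_big /= -w_sum1 fsumE.
apply: eq_bigr => y _; have [_ P_sum1] := P_distr y.
rewrite -[RHS]Rmult_1_l -P_sum1 fsumE big_distrl /=.
by apply: eq_bigr.
Qed.

Lemma tv_truncate (w : Y -> R) : (forall y, 0 <= w y) ->
  tv_dist (fun z : option T * Y => match z.1 with Some t => P t z.2 * w z.2 | None => 0 end)
          (fun z => truncate z.1 z.2 * w z.2)
  = fsum (fun z : T * Y => P z.1 z.2 * w z.2)
    - fsum (fun z : T * Y => P z.1 z.2 * w z.2 * Defs.ind (E z.1 z.2)).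
Proof.
move=> w_ge0.
have P_ge0 t y : 0 <= P t y by case: (P_distr y).
have lost_ge0 t y : 0 <= P t y * w y * (1 - Defs.ind (E t y)).
  have := ind_bounds (E t y) => ind_01.
  by apply: Rmult_le_pos; [exact: Rmult_le_pos (P_ge0 t y) (w_ge0 y) | lra].
pose lost := \big[Rplus/0]_(t : T) \big[Rplus/0]_(y : Y)
              (P t y * w y * (1 - Defs.ind (E t y))).
have abort_part : \big[Rplus/0]_(y : Y) Rabs (0 - truncate None y * w y) = lost.
  rewrite /lost exchange_big /=; apply: eq_bigr => y _.
  rewrite Rminus_0_l Rabs_Ropp /= fsumE big_distrl /= Rabs_pos_eq.
    by apply: eq_bigr => t _; ring.
  by apply: big_Rplus_ge0 => t _; have := lost_ge0 t y; lra.
have output_part : \big[Rplus/0]_(t : T) \big[Rplus/0]_(y : Y)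
    Rabs (P t y * w y - truncate (Some t) y * w y) = lost.
  apply: eq_bigr => t _; apply: eq_bigr => y _.
  by rewrite /= Rabs_pos_eq; [ring | have := lost_ge0 t y; lra].
have lost_eq : lost = fsum (fun z : T * Y => P z.1 z.2 * w z.2)
    - fsum (fun z : T * Y => P z.1 z.2 * w z.2 * Defs.ind (E z.1 z.2)).
  rewrite !fsum_pair /Rminus -big_Rplus_opp -big_split /=; apply: eq_bigr => t _.
  by rewrite -big_Rplus_opp -big_split; apply: eq_bigr => y _ /=; ring.
rewrite /tv_dist fsum_pair big_option_Rplus /= abort_part output_part; lra.
Qed.

End Truncation.

Section MinEntropy.
Variables (A X : finType) (n : nat) (PAX : option (n.-tuple A) -> n.-tuple X -> R)
  (lam : n.-tuple A -> n.-tuple X -> Prop).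

Definition guess_prob : R :=
  fsum (fun x => Pr_event_x PAX lam x / Pr_event PAX lam *
    fmax (fun a => PAX (Some a) x * Defs.ind (lam a x) / Pr_event_x PAX lam x)).

Local Notation g a x := (PAX (Some a) x * Defs.ind (lam a x)).

Variables (w : n.-tuple X -> R) (B : R).
Hypothesis g_bounds : forall a x, 0 <= g a x <= B * w x.
Hypothesis w_sum1 : fsum w = 1.
Hypothesis event_gt0 : 0 < Pr_event PAX lam.

Lemma Pr_event_x_ge0 x : 0 <= Pr_event_x PAX lam x.
Proof. by rewrite /Pr_event_x fsumE; apply: big_Rplus_ge0 => a _; case: (g_bounds a x). Qed.

Lemma Pr_event_x_inv_ge0 x : 0 <= / Pr_event_x PAX lam x.
Proof.
case: (Pr_event_x_ge0 x) => [Px_gt0 | <-]; first exact/Rlt_le/Rinv_0_lt_compat.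
by rewrite Rinv_0; lra.
Qed.

Lemma Pr_event_x_ratio_01 x :
  0 <= Pr_event_x PAX lam x * / Pr_event_x PAX lam x <= 1.
Proof.
split; first exact: Rmult_le_pos (Pr_event_x_ge0 x) (Pr_event_x_inv_ge0 x).
case: (Req_dec (Pr_event_x PAX lam x) 0) => [-> | Px_neq0]; last by rewrite Rinv_r //; lra.
by rewrite Rmult_0_l; lra.
Qed.

(* The factor Px / Px is 1, or 0 when Px = 0 since Rocq's division has / 0 = 0. *)
Lemma guess_prob_term x :
  Pr_event_x PAX lam x / Pr_event PAX lam *
    fmax (fun a => g a x / Pr_event_x PAX lam x)
  = Pr_event_x PAX lam x * / Pr_event_x PAX lam x * fmax (fun a => g a x)
    / Pr_event PAX lam.
Proof. by rewrite /fmax /Rdiv (maxR_scale _ _ (Pr_event_x_inv_ge0 x)); ring. Qed.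

Lemma event_witness : exists a x, 0 < g a x.
Proof.
move: event_gt0; rewrite /Pr_event fsumE => /big_Rplus_gt0_exists [[a x] g_gt0].
by exists a, x.
Qed.

Lemma guess_prob_le : guess_prob <= B / Pr_event PAX lam.
Proof.
have inv_Pl_gt0 := Rinv_0_lt_compat _ event_gt0.
(* fmax over an empty type is 0, so B * w x >= 0 needs the witness a0. *)
have [a0 _] := event_witness.
rewrite /guess_prob fsumE.
apply: Rle_trans (_ : \big[Rplus/0]_x (B * w x * / Pr_event PAX lam) <= _).
  apply: big_Rplus_le => x _; rewrite guess_prob_term /Rdiv.
  apply: Rmult_le_compat_r; first lra.
  have := Pr_event_x_ratio_01 x.
  have max_le : fmax (fun a => g a x) <= B * w x.
    apply: maxR_le => [| a]; last by case: (g_bounds a x).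
    by case: (g_bounds a0 x) => *; lra.
  have max_ge0 : 0 <= fmax (fun a => g a x) by exact: maxR_ge0.
  nra.
by rewrite -big_distrl -big_distrr /= -fsumE w_sum1 Rmult_1_r; right.
Qed.

Lemma guess_prob_gt0 : 0 < guess_prob.
Proof.
have [a0 [x0 g0_gt0]] := event_witness.
have inv_Pl_gt0 := Rinv_0_lt_compat _ event_gt0.
have term_ge0 x : 0 <= Pr_event_x PAX lam x * / Pr_event_x PAX lam x *
                      fmax (fun a => g a x) / Pr_event PAX lam.
  apply: Rmult_le_pos; last lra.
  apply: Rmult_le_pos; last exact: maxR_ge0.
  exact: (proj1 (Pr_event_x_ratio_01 x)).
have Px0_gt0 : 0 < Pr_event_x PAX lam x0.
  apply: Rlt_le_trans g0_gt0 _; rewrite /Pr_event_x fsumE.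
  by apply: (big_Rplus_ge_term a0 (F := fun a => g a x0)) => a; case: (g_bounds a x0).
have max0_ge : g a0 x0 <= fmax (fun a => g a x0) by apply: maxR_ge; exact: mem_enum.
apply: Rlt_le_trans (_ : g a0 x0 / Pr_event PAX lam <= _).
  exact: Rdiv_lt_0_compat.
rewrite /guess_prob fsumE (eq_bigr _ (fun x _ => guess_prob_term x)).
apply: Rle_trans (big_Rplus_ge_term x0 term_ge0).
rewrite Rinv_r ?Rmult_1_l; last lra.
by apply: Rmult_le_compat_r; lra.
Qed.

Lemma Hmin_lam_ge : Hmin_lam PAX lam >= - log2 B + log2 (Pr_event PAX lam).
Proof.
have S_gt0 := guess_prob_gt0; have S_le := guess_prob_le.
have B_gt0 : 0 < B.
  have inv_Pl_gt0 := Rinv_0_lt_compat _ event_gt0.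
  rewrite /Rdiv in S_le; nra.
have := log2_le S_gt0 S_le.
rewrite /Rdiv log2_mult ?log2_Rinv //; last exact: Rinv_0_lt_compat.
by change (Hmin_lam PAX lam) with (- log2 guess_prob); lra.
Qed.

End MinEntropy.

Section DeviceDistribution.
Variables (A X : finType).

Definition round_distr (n : nat) (beh : seq A -> seq X -> behavior A X) : Prop :=
  forall sa sx, size sa = size sx -> (size sa < n)%N -> forall x, is_distr (fun a => beh sa sx a x).

Lemma devP_cons n (beh : seq A -> seq X -> behavior A X)
  (a0 : A) (a : n.-tuple A) (x0 : X) (x : n.-tuple X) :
  devP beh [tuple of a0 :: a] [tuple of x0 :: x] =
  beh [::] [::] a0 x0 * devP (fun sa sx => beh (a0 :: sa) (x0 :: sx)) a x.
Proof.
rewrite /devP !prodRE !big_enum /= big_ord_recl /= !tnth0.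
by congr (_ * _); apply: eq_bigr => j _; rewrite !tnthS.
Qed.

Lemma devP_ge0 n beh : round_distr n beh -> forall a x, 0 <= @devP A X n beh a x.
Proof.
move=> beh_distr a x; rewrite /devP prodRE; apply: big_Rmult_ge0 => j.
have size_take_j (T : Type) (s : n.-tuple T) : size (take j s) = j.
  by rewrite size_take size_tuple ltn_ord.
by apply: (proj1 (beh_distr _ _ _ _ _)); rewrite ?size_take_j.
Qed.

Lemma devP_sum1 n beh : round_distr n beh ->
  forall x : n.-tuple X, \big[Rplus/0]_(a : n.-tuple A) devP beh a x = 1.
Proof.
elim: n beh => [|n IH] beh beh_distr x.
  rewrite (eq_bigr (fun _ => 1)) => [|a _]; last by rewrite /devP enum_ord0.
  by rewrite big_const card_tuple /=; lra.
rewrite (reindex (fun p : A * n.-tuple A => [tuple of p.1 :: p.2])); last first.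
  exists (fun t : n.+1.-tuple A => (thead t, [tuple of behead t])).
    by move=> [a0 t] _ /=; rewrite theadE; congr (_, _); apply: val_inj.
  by move=> t _ /=; rewrite -tuple_eta.
rewrite -(pair_bigA _ (fun a0 (t : n.-tuple A) => devP beh [tuple of a0 :: t] x)) /=.
have [_ first_sum1] := beh_distr [::] [::] erefl erefl (thead x).
rewrite -[RHS]first_sum1 fsumE [x]tuple_eta; apply: eq_bigr => a0 _.
under eq_bigr do rewrite devP_cons.
rewrite -big_distrr /= IH ?Rmult_1_r // => sa sx size_eq size_lt.
by apply: (beh_distr (a0 :: sa) (thead x :: sx)) => /=; [rewrite size_eq | exact: size_lt].
Qed.

Lemma devP_is_distr n beh : round_distr n beh ->
  forall x : n.-tuple X, is_distr (fun a => devP beh a x).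
Proof.
by move=> beh_distr x; split => [a |]; [exact: devP_ge0 | rewrite fsumE devP_sum1].
Qed.

Lemma device_ok_round_distr (Q : behavior A X -> Prop) n beh :
  (forall p, Q p -> forall x, is_distr (fun a => p a x)) ->
  device_ok n Q beh -> round_distr n beh.
Proof. by move=> Qprob beh_ok sa sx size_eq size_lt; apply: Qprob; apply: beh_ok. Qed.

End DeviceDistribution.

Lemma inputP_is_devP (X : finType) n (pi : X -> R) (x : n.-tuple X) :
  inputP pi x = devP (fun _ _ b _ => pi b) x [tuple of nseq n tt].
Proof. by []. Qed.

Lemma inputP_is_distr (X : finType) n (pi : X -> R) :
  is_distr pi -> is_distr (@inputP X n pi).
Proof.
move=> [pi_ge0 pi_sum1].
have const_distr : round_distr n (fun (_ : seq X) (_ : seq unit) b (_ : unit) => pi b).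
  by move=> *; split.
split => [x | ]; first by rewrite inputP_is_devP; apply: devP_ge0.
rewrite fsumE -(devP_sum1 const_distr [tuple of nseq n tt]).
by apply: eq_bigr => x _; rewrite inputP_is_devP.
Qed.

Definition avg_behavior (A X : finType) (I : Type) (F : I -> behavior A X) (s : seq I)
  : behavior A X :=
  fun a x => / INR (size s) * sumR s (fun i => F i a x).

Section BellValue.
Variables (A X : finType) (t : nat) (f : 'I_t -> A -> X -> R).

Lemma bell_val_lin u v (p1 p2 : behavior A X) :
  bell_val f (fun a x => u * p1 a x + v * p2 a x)
  = (fun k => u * bell_val f p1 k + v * bell_val f p2 k).
Proof.
apply: functional_extensionality => k.
rewrite /bell_val !fsumE !big_distrr -big_split; apply: eq_bigr => z _ /=; ring.
Qed.

Lemma bell_val_avg I (F : I -> behavior A X) s :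
  bell_val f (avg_behavior F s) = (fun k => / INR (size s) * sumR s (fun i => bell_val f (F i) k)).
Proof.
apply: functional_extensionality => k.
rewrite /bell_val /avg_behavior sumRE fsumE.
rewrite (eq_bigr (fun z => / INR (size s) *
  \big[Rplus/0]_(i <- s) (f k z.1 z.2 * F i z.1 z.2))) => [|z _]; last first.
  by rewrite sumRE -Rmult_assoc (Rmult_comm (f k z.1 z.2)) Rmult_assoc big_distrr.
rewrite -big_distrr exchange_big /=; congr (_ * _).
by apply: eq_bigr => i _; rewrite fsumE.
Qed.

End BellValue.

Lemma nu_sumR (X : finType) n (Xr : pred X) (x : n.-tuple X) (eta : R) :
  INR (nu Xr x) * eta = sumR (enum 'I_n) (fun j => if Xr (tnth x j) then 0 else eta).
Proof.
rewrite /nu -sum1_count big_tuple sumRE big_enum /=.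
rewrite (big_morph INR plus_INR (erefl (INR 0))) big_distrl /= big_mkcond /=.
by apply: eq_bigr => j _; case: (Xr (tnth x j)) => /=; lra.
Qed.

Lemma mean_cons (I : Type) (i : I) (s : seq I) (h : I -> R) : s <> [::] ->
  / INR (size (i :: s)) * sumR (i :: s) h
  = / INR (size (i :: s)) * h i
    + (1 - / INR (size (i :: s))) * (/ INR (size s) * sumR s h).
Proof.
move=> s_neq0; have size_gt0 : 0 < INR (size s).
  by apply: lt_0_INR; case: s s_neq0 => // *; apply/ltP.
rewrite [size _]/= S_INR /=; field; lra.
Qed.

Lemma inv_size_cons_01 (I : Type) (i : I) (s : seq I) :
  0 <= / INR (size (i :: s)) <= 1.
Proof.
rewrite [size _]/= S_INR; have := pos_INR (size s) => size_ge0; split.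
  by apply/Rlt_le/Rinv_0_lt_compat; lra.
by rewrite -Rinv_1; apply: Rinv_le_contravar; lra.
Qed.

Definition history_behavior (A X : finType) n (beh : seq A -> seq X -> behavior A X)
  (a : n.-tuple A) (x : n.-tuple X) (j : 'I_n) : behavior A X :=
  beh (take j a) (take j x).

Lemma devP_history (A X : finType) n (beh : seq A -> seq X -> behavior A X) a x :
  @devP A X n beh a x
  = prodR (enum 'I_n) (fun j => history_behavior beh a x j (tnth a j) (tnth x j)).
Proof. by []. Qed.

Section RBFunction.
Variables (A X : finType) (t : nat) (Q : behavior A X -> Prop).
Hypothesis Qprob : forall p, Q p -> forall x, is_distr (fun a => p a x).
Hypothesis Qconv : forall q p1 p2, 0 <= q <= 1 -> Q p1 -> Q p2 ->
  Q (fun a x => q * p1 a x + (1 - q) * p2 a x).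
Variables (f : 'I_t -> A -> X -> R) (Xr : pred X) (H : vec t -> R).
Hypothesis HRB : is_RB_function Q f Xr H.

Lemma jensen_avg_behavior (I : Type) (F : I -> behavior A X) (s : seq I) :
  (forall i, Q (F i)) -> s <> [::] ->
  Q (avg_behavior F s) /\
  H (bell_val f (avg_behavior F s)) <= / INR (size s) * sumR s (fun i => H (bell_val f (F i))).
Proof.
move=> QF; elim: s => [//| i s IH] _.
case: s IH => [_ | j s IH].
  have -> : avg_behavior F [:: i] = F i.
    by do 2 apply: functional_extensionality => ?; rewrite /avg_behavior /=; field.
  by split; [exact: QF | rewrite /= Rinv_1; lra].
set s' := j :: s in IH *.
have [Q_avg H_avg] : Q (avg_behavior F s') /\
    H (bell_val f (avg_behavior F s')) <= / INR (size s') * sumR s' (fun i => H (bell_val f (F i))).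
  by apply: IH.
have q_01 := inv_size_cons_01 i s'.
have -> : avg_behavior F (i :: s') = (fun a x => / INR (size (i :: s')) * F i a x
            + (1 - / INR (size (i :: s'))) * avg_behavior F s' a x).
  by do 2 apply: functional_extensionality => ?; rewrite /avg_behavior mean_cons.
split; first exact: Qconv.
rewrite bell_val_lin mean_cons //.
apply: Rle_trans (proj2 (proj2 HRB) _ _ _ q_01 (QF i) Q_avg) _.
by apply: Rplus_le_compat_l; apply: Rmult_le_compat_l; lra.
Qed.

Variable eta : R.
Hypothesis H_le_eta : forall p, Q p -> H (bell_val f p) <= eta.

Lemma log2_round_le p a x : Q p -> 0 < p a x ->
  log2 (p a x) <= - H (bell_val f p) + (if Xr x then 0 else eta).
Proof.
move=> Qp p_gt0; case Xr_x: (Xr x).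
  by have := proj1 (proj2 HRB) _ Qp a x Xr_x p_gt0; lra.
have [p_ge0 p_sum1] := Qprob Qp x.
have p_le1 : p a x <= 1 by rewrite -p_sum1 fsumE; apply: (big_Rplus_ge_term a p_ge0).
by have := log2_le1 p_gt0 p_le1; have := H_le_eta Qp; lra.
Qed.

Variables (n : nat) (beh : seq A -> seq X -> behavior A X).
Hypothesis beh_ok : device_ok n Q beh.
Variables (a : n.-tuple A) (x : n.-tuple X).

Local Notation H_round j := (H (bell_val f (history_behavior beh a x j))).

Lemma Q_history_behavior j : Q (history_behavior beh a x j).
Proof. by apply: beh_ok; rewrite !size_take !size_tuple ltn_ord. Qed.

Lemma avg_val_history :
  avg_val f beh a x = bell_val f (avg_behavior (history_behavior beh a x) (enum 'I_n)).
Proof. by rewrite bell_val_avg size_enum_ord. Qed.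

Variable HV : (vec t -> Prop) -> R.
Hypothesis HHV : is_set_extension Q f H HV.

Lemma HV_mul_le_sum_H (S : vec t -> Prop) : S (avg_val f beh a x) ->
  INR n * HV S <= sumR (enum 'I_n) (fun j => H_round j).
Proof.
move=> S_avg; have [n0 | n_gt0] := posnP n.
  have -> : enum 'I_n = [::] by apply: size0nil; rewrite size_enum_ord.
  by rewrite [in INR n]n0 /=; lra.
have enum_neq0 : enum 'I_n <> [::].
  by move/(congr1 size); rewrite size_enum_ord => n_eq0; rewrite n_eq0 in n_gt0.
have [Q_avg H_avg] := jensen_avg_behavior Q_history_behavior enum_neq0.
rewrite avg_val_history in S_avg.
have := proj1 HHV S _ Q_avg S_avg; rewrite size_enum_ord in H_avg.
have n_pos : 0 < INR n by apply: lt_0_INR; apply/ltP.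
move=> HV_le.
apply: Rle_trans (_ : INR n * (/ INR n * sumR (enum 'I_n) (fun j => H_round j)) <= _).
  by apply: Rmult_le_compat_l; [lra | exact: Rle_trans HV_le H_avg].
by right; field; lra.
Qed.

Lemma log2_devP_le : 0 < devP beh a x ->
  log2 (devP beh a x) <= - sumR (enum 'I_n) (fun j => H_round j) + INR (nu Xr x) * eta.
Proof.
move=> devP_gt0.
have round_ge0 j : 0 <= history_behavior beh a x j (tnth a j) (tnth x j).
  by case: (Qprob (Q_history_behavior j) (tnth x j)).
have round_gt0 j : 0 < history_behavior beh a x j (tnth a j) (tnth x j).
  exact: (prodR_gt0_factor round_ge0 devP_gt0 (mem_enum _ j)).
rewrite devP_history log2_prodR // nu_sumR !sumRE -big_Rplus_opp -big_split /=.
apply: big_Rplus_le => j _.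
exact: log2_round_le (Q_history_behavior j) (round_gt0 j).
Qed.

Lemma devP_le_Rpower2 (S : vec t -> Prop) (Hthr : R) :
  S (avg_val f beh a x) -> INR n * HV S - INR (nu Xr x) * eta >= Hthr ->
  devP beh a x <= Rpower 2 (- Hthr).
Proof.
move=> S_avg above_thr.
case: (devP_ge0 (device_ok_round_distr Qprob beh_ok) a x) => [devP_gt0 | <-];
  last exact/Rlt_le/exp_pos.
apply: le_Rpower2_of_log2 => //.
by have := log2_devP_le devP_gt0; have := HV_mul_le_sum_H S_avg; lra.
Qed.

End RBFunction.

Theorem theorem1 (A X : finType) (t n : nat)
  (Q : behavior A X -> Prop)
  (Qprob : forall p, Q p -> forall x, is_distr (fun a => p a x))
  (Qconv : forall q p1 p2, 0 <= q <= 1 -> Q p1 -> Q p2 ->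
             Q (fun a x => q * p1 a x + (1 - q) * p2 a x))
  (f : 'I_t -> A -> X -> R)
  (Xr : pred X) (HXr : exists x, Xr x)
  (H : vec t -> R) (HRB : is_RB_function Q f Xr H)
  (HV : (vec t -> Prop) -> R) (HHV : is_set_extension Q f H HV)
  (eta : R) (Heta : forall p, Q p -> H (bell_val f p) <= eta)
  (eps eps' Hthr : R) (Heps : 0 < eps) (Heps' : 0 < eps')
  (pi : X -> R) (Hpi : is_distr pi)
  (V : n.-tuple A -> n.-tuple X -> R -> vec t -> Prop)
  (HVconf : conf_region Q f pi eps V)
  (beh : seq A -> seq X -> behavior A X) (Hbeh : device_ok n Q beh) :
  let lam := fun (a : n.-tuple A) (x : n.-tuple X) =>
               INR n * HV (V a x eps) - INR (nu Xr x) * eta >= Hthr in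
  exists Pt : option (n.-tuple A) -> n.-tuple X -> R,
    (forall x, is_distr (fun o => Pt o x)) /\
    tv_dist (fun z : option (n.-tuple A) * n.-tuple X => P_AX beh pi z.1 z.2)
            (fun z : option (n.-tuple A) * n.-tuple X => Pt_AX pi Pt z.1 z.2) <= eps /\
    (Pr_event (Pt_AX pi Pt) lam <= eps' \/
     Hmin_lam (Pt_AX pi Pt) lam >= Hthr - log2 (/ eps')).
Proof.
move=> lam.
have devP_distr := devP_is_distr (device_ok_round_distr Qprob Hbeh).
have [inputP_ge0 inputP_sum1] := inputP_is_distr n Hpi.
pose inV a x := V a x eps (avg_val f beh a x).
pose Pt := truncate (devP beh) inV.
have Pt_bounds a x :
    0 <= Pt_AX pi Pt (Some a) x * Defs.ind (lam a x) <= Rpower 2 (- Hthr) * inputP pi x.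
  have bound_ge0 : 0 <= Rpower 2 (- Hthr) * inputP pi x.
    exact: Rmult_le_pos (Rlt_le _ _ (exp_pos _)) (inputP_ge0 x).
  rewrite /Pt_AX /Pt /truncate.
  case: (ind_cases (inV a x)) => -[inV_ax ->]; last by rewrite Rmult_0_r !Rmult_0_l; lra.
  case: (ind_cases (lam a x)) => -[lam_ax ->]; last by rewrite Rmult_0_r; lra.
  have := devP_le_Rpower2 Qprob Qconv HRB Heta Hbeh HHV inV_ax lam_ax.
  have := proj1 (devP_distr x) a; have := inputP_ge0 x.
  by rewrite !Rmult_1_r; split; nra.
exists Pt; split; [exact: truncate_is_distr | split].
  rewrite (tv_truncate _ _ inputP_ge0) //.
  rewrite (fsum_joint devP_distr (conj inputP_ge0 inputP_sum1)).
  apply: Rle_trans (_ : 1 - (1 - eps) <= eps); last lra.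
  exact/Rplus_le_compat_l/Ropp_le_contravar/Rge_le/HVconf.
case: (Rle_or_lt (Pr_event (Pt_AX pi Pt) lam) eps') => [small | large]; [by left | right].
have := Hmin_lam_ge Pt_bounds inputP_sum1 (Rlt_trans _ _ _ Heps' large).
by rewrite log2_Rpower2 log2_Rinv //; have := log2_lt Heps' large; lra.
Qed.
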